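(* Let $k$ be a field of characteristic $0$, $L/k$ a field extension, $S\in\mathbf{Fam}_L$ with data $a,b,t_0\in L$, and $\{\mathcal{T}_\gamma\}$ the family of trisections described in the context. Let $R=(x_R,y_R,t_R)\in\mathcal{E}$ with $t_R\neq t_0$, and let $\mathcal{T}_R$ be the unique member of the family containing $R$. Then there are at most two points $P\in\mathcal{T}_R$ with $P\neq R$ and with the same $t$-coordinate as $R$.
   Context: $S$ is a del Pezzo surface of degree one in $\mathbb{P}(2,3,1,1)$ given by $Y^2=X^3+F(Z,W)X+G(Z,W)$, $F,G\in k[Z,W]$ homogeneous of degrees $4,6$; $f(t)=F(t,1)$, $g(t)=G(t,1)$; $\mathcal{E}:y^2=x^3+f(t)x+g(t)$ is the rational elliptic surface obtained by blowing up the base point of $|-K_S|$. $S\in\mathbf{Fam}_L$ means there exist $a,b,t_0\in L$ with $t_0\neq0$, $at_0+b\neq0$, $f(t_0)\neq-(at_0+b)^4/3$, such that $t_0$ is a double root of $P(t)=-f(t)^2/4+(at+b)^4f(t)/6+(at+b)^2g(t)+(at+b)^8/108$. Let $Q=((at_0+b)^2/3,\ (at_0+b)^3/6+f(t_0)/(2(at_0+b)),\ t_0)$. For a parameter $\gamma$, $\mathcal{T}_\gamma\subset\mathcal{E}$ is the curve $y=axt+bx+c(\gamma)t^3+d(\gamma)t^2+e(\gamma)t+\gamma$, where $c(\gamma),d(\gamma),e(\gamma)$ are the coefficients, uniquely determined by $\gamma$, for which $\mathcal{T}_\gamma$ has a triple point at $Q$; for $t_R\neq t_0$ there is a unique $\gamma$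 with $R\in\mathcal{T}_\gamma$. *)

From HB Require Import structures.
From mathcomp Require Import all_boot all_order all_algebra.
Set Implicit Arguments. Unset Strict Implicit. Unset Printing Implicit Defensive.
Import Order.TTheory GRing.Theory Num.Theory.
Local Open Scope ring_scope.

(* Binary forms.  A homogeneous F in K[Z,W] of degree n is encoded by its  *)
(* dehomogenisation f(t) = F(t,1), a polynomial of size <= n.+1:           *)
(*   F(Z,W) = \sum_(i <= n) f_i Z^i W^(n-i).                               *)
Definition bform (K : fieldType) (n : nat) (p : {poly K}) (Z W : K) : K :=
  \sum_(i < n.+1) p`_i * Z ^+ i * W ^+ (n - i).
Definition bform_dZ (K : fieldType) (n : nat) (p : {poly K}) (Z W : K) : K :=
  \sum_(i < n.+1) (p`_i *+ i) * Z ^+ i.-1 * W ^+ (n - i).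
Definition bform_dW (K : fieldType) (n : nat) (p : {poly K}) (Z W : K) : K :=
  \sum_(i < n.+1) (p`_i *+ (n - i)) * Z ^+ i * W ^+ (n - i).-1.

(* S : Y^2 = X^3 + F(Z,W) X + G(Z,W) in P(2,3,1,1), F = hom. of f (deg 4), *)
(* G = hom. of g (deg 6).  S is a del Pezzo surface of degree one iff it is *)
(* smooth, i.e. (S avoids the singular points of P(2,3,1,1)) the affine     *)
(* cone has no singular point other than the origin, over any extension K  *)
(* of k (equivalently over an algebraic closure).                          *)
Definition dP1_smooth (k : fieldType) (f g : {poly k}) : Prop :=
  forall (K : fieldType) (phi : {rmorphism k -> K}) (X Y Z W : K),
    let fK := map_poly phi f in
    let gK := map_poly phi g in
    [|| X != 0, Y != 0, Z != 0 | W != 0] ->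
    ~ [/\ Y ^+ 2 - X ^+ 3 - bform 4 fK Z W * X - bform 6 gK Z W = 0,
          - (3%:R * X ^+ 2) - bform 4 fK Z W = 0,
          2%:R * Y = 0,
          - bform_dZ 4 fK Z W * X - bform_dZ 6 gK Z W = 0 &
          - bform_dW 4 fK Z W * X - bform_dW 6 gK Z W = 0].

Definition delPezzo1 (k : fieldType) (f g : {poly k}) : Prop :=
  [/\ (size f <= 5)%N, (size g <= 7)%N & dP1_smooth f g].

Section Fam.
Variables (k L : fieldType) (iota : {rmorphism k -> L}) (f g : {poly k}).

Definition fL : {poly L} := map_poly iota f.
Definition gL : {poly L} := map_poly iota g.

Definition linp (a b : L) : {poly L} := a%:P * 'X + b%:P.

Definition Ppoly (a b : L) : {poly L} :=
  - ((4%:R)^-1 *: fL ^+ 2) + (6%:R)^-1 *: (linp a b ^+ 4 * fL)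
  + linp a b ^+ 2 * gL + (108%:R)^-1 *: linp a b ^+ 8.

(* S \in Fam_L with data a, b, t0 ("double root" read as multiplicity >= 2) *)
Definition fam_data (a b t0 : L) : Prop :=
  [/\ t0 != 0, a * t0 + b != 0,
      fL.[t0] != - ((a * t0 + b) ^+ 4 / 3%:R) &
      ('X - t0%:P) ^+ 2 %| Ppoly a b].

Definition xQ (a b t0 : L) : L := (a * t0 + b) ^+ 2 / 3%:R.
Definition yQ (a b t0 : L) : L :=
  (a * t0 + b) ^+ 3 / 6%:R + fL.[t0] / (2%:R * (a * t0 + b)).

Definition onE (P : L * L * L) : Prop :=
  let: (x, y, t) := P in y ^+ 2 = x ^+ 3 + fL.[t] * x + gL.[t].

Definition onT (a b c d e gam : L) (P : L * L * L) : Prop :=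
  let: (x, y, t) := P in
  y = a * x * t + b * x + c * t ^+ 3 + d * t ^+ 2 + e * t + gam.

(* Bivariate polynomials in (x, t): outer variable x, inner variable t. *)
Definition ev2 (p : {poly {poly L}}) (x t : L) : L :=
  (map_poly (fun q : {poly L} => q.[t]) p).[x].
Definition dx (p : {poly {poly L}}) : {poly {poly L}} := p^`().
Definition dt (p : {poly {poly L}}) : {poly {poly L}} :=
  map_poly (fun q : {poly L} => q^`()) p.

Definition Cpoly (c d e gam : L) : {poly L} :=
  c%:P * 'X ^+ 3 + d%:P * 'X ^+ 2 + e%:P * 'X + gam%:P.
Definition Upoly (a b c d e gam : L) : {poly {poly L}} :=
  'X * (linp a b)%:P + (Cpoly c d e gam)%:P.
(* Phi(x,t) = u(x,t)^2 - x^3 - f(t) x - g(t); T is isomorphic (via the    *)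
(* projection (x,y,t) |-> (x,t)) to the plane curve Phi = 0.              *)
Definition Phi (a b c d e gam : L) : {poly {poly L}} :=
  Upoly a b c d e gam ^+ 2 - 'X ^+ 3 - 'X * fL%:P - gL%:P.

Definition triple_at_Q (a b t0 c d e gam : L) : Prop :=
  let x0 := xQ a b t0 in
  let Ph := Phi a b c d e gam in
  onT a b c d e gam (x0, yQ a b t0, t0) /\
  [/\ ev2 Ph x0 t0 = 0, ev2 (dx Ph) x0 t0 = 0, ev2 (dt Ph) x0 t0 = 0 &
      [/\ ev2 (dx (dx Ph)) x0 t0 = 0, ev2 (dx (dt Ph)) x0 t0 = 0 &
          ev2 (dt (dt Ph)) x0 t0 = 0]].

End Fam.

From HB Require Import structures.
From mathcomp Require Import all_boot all_order all_algebra.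
From mathcomp Require Import ring.
Set Implicit Arguments. Unset Strict Implicit. Unset Printing Implicit Defensive.
Import Order.TTheory GRing.Theory Num.Theory.
Local Open Scope ring_scope.

(* On the fibre t = t_R, the curve T_R is the graph y = l x + C of an affine
   function of x, with l = a t_R + b and C = C(t_R).  Substituting it into the
   Weierstrass equation shows that the x-coordinates of the points of
   E /\ T_R over t_R are roots of the monic cubic x^3 + f x + g - (l x + C)^2,
   and distinct points have distinct x-coordinates.  So there are at most
   three such points, one of which is R. *)

Section FibreCubic.
Variable L : fieldType.

Definition fibre_cubic (l C ft gt : L) : {poly L} :=
  'X^3 + ft *: 'X + gt%:P - (l *: 'X + C%:P) ^+ 2.

Lemma size_fibre_cubic (l C ft gt : L) : size (fibre_cubic l C ft gt) = 4%N.
Proof.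
have size_sq : (size ((l *: 'X + C%:P) ^+ 2)%R <= 3)%N.
  have size_lin : (size (l *: 'X + C%:P)%R <= 2)%N.
    apply: (leq_trans (size_polyD _ _)).
    by rewrite geq_max (leq_trans (size_scale_leq _ _)) ?size_polyX //
      (leq_trans (size_polyC_leq1 _)).
  apply: (leq_trans (size_poly_exp_leq _ 2)).
  by move: size_lin; case: (size _) => [|[|[|]]].
have size_rest : (size (ft *: 'X + gt%:P - (l *: 'X + C%:P) ^+ 2)%R <= 3)%N.
  apply: (leq_trans (size_polyD _ _)); rewrite geq_max size_polyN size_sq andbT.
  apply: (leq_trans (size_polyD _ _)); rewrite geq_max.
  by rewrite (leq_trans (size_scale_leq _ _)) ?size_polyX // (leq_trans (size_polyC_leq1 _)).
by rewrite /fibre_cubic -!addrA size_polyDl ?size_polyXn // addrA ltnS.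
Qed.

Lemma root_fibre_cubic (l C ft gt x : L) :
  x ^+ 3 + ft * x + gt = (l * x + C) ^+ 2 -> root (fibre_cubic l C ft gt) x.
Proof.
move=> eq_x; apply/rootP.
by rewrite !(hornerE, hornerXn) eq_x subrr.
Qed.

End FibreCubic.

Section FibreOfT.
Variables (k L : fieldType) (iota : {rmorphism k -> L}) (f g : {poly k}).
Variables (a b c d e gam : L).

Lemma onT_affine (x y t : L) :
  onT a b c d e gam (x, y, t) ->
  y = (linp a b).[t] * x + (Cpoly c d e gam).[t].
Proof.
rewrite /onT /linp /Cpoly !(hornerD, hornerCM, hornerX, hornerXn, hornerC) => ->.
ring.
Qed.

Lemma onT_fibre_inj (P P' : L * L * L) :
  onT a b c d e gam P -> onT a b c d e gam P' ->
  P.2 = P'.2 -> P.1.1 = P'.1.1 -> P = P'.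
Proof.
by case: P P' => [[x y] t] [[x' y'] t'] /onT_affine -> /onT_affine -> /= -> ->.
Qed.

Lemma onE_onT_root_fibre_cubic (x y t : L) :
  onE iota f g (x, y, t) -> onT a b c d e gam (x, y, t) ->
  root (fibre_cubic (linp a b).[t] (Cpoly c d e gam).[t]
                    (fL iota f).[t] (gL iota g).[t]) x.
Proof.
by move=> onE_xyt /onT_affine y_def; apply: root_fibre_cubic; rewrite -y_def.
Qed.

Lemma fibre_points_le3 (t : L) (s : seq (L * L * L)) :
  uniq s ->
  (forall P, P \in s -> [/\ onE iota f g P, onT a b c d e gam P & P.2 = t]) ->
  (size s <= 3)%N.
Proof.
move=> uniq_s on_s.
set q := fibre_cubic (linp a b).[t] (Cpoly c d e gam).[t]
                     (fL iota f).[t] (gL iota g).[t].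
have q_neq0 : q != 0 by rewrite -size_poly_eq0 size_fibre_cubic.
have roots_q : all (root q) (map (fun P => P.1.1) s).
  apply/allP => _ /mapP [[[x y] t'] /on_s [onE_P onT_P /= t'_eq] ->] /=.
  by move: onE_P onT_P; rewrite t'_eq; apply: onE_onT_root_fibre_cubic.
have uniq_x : uniq (map (fun P => P.1.1) s).
  rewrite map_inj_in_uniq // => P P' /on_s [_ onT_P tP] /on_s [_ onT_P' tP'].
  by apply: onT_fibre_inj; rewrite ?tP ?tP'.
by have := max_poly_roots q_neq0 roots_q uniq_x; rewrite size_map size_fibre_cubic.
Qed.

End FibreOfT.

Theorem lemma3p9 (k L : fieldType) (iota : {rmorphism k -> L})
    (f g : {poly k}) (a b t0 c d e gam : L) (R : L * L * L) :
  [pchar k] =i pred0 ->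
  delPezzo1 f g ->
  fam_data iota f g a b t0 ->
  triple_at_Q iota f g a b t0 c d e gam ->
  onE iota f g R -> R.2 != t0 ->
  onT a b c d e gam R ->
  forall s : seq (L * L * L), uniq s ->
    (forall P, P \in s ->
       [/\ onE iota f g P, onT a b c d e gam P, P != R & P.2 = R.2]) ->
    (size s <= 2)%N.
Proof.
move=> _ _ _ _ onE_R _ onT_R s uniq_s on_s.
have R_notin_s : R \notin s by apply/negP => /on_s [_ _ /eqP].
have := @fibre_points_le3 k L iota f g a b c d e gam R.2 (R :: s).
rewrite /= R_notin_s uniq_s; apply=> // P; rewrite inE => /predU1P [-> //|].
by case/on_s.
Qed.
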